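(* Define the linear functions $H_1,H_2,H_3,H_4:\mathbb{R}^3\to\mathbb{R}$ by $H_1(x)=x_1-x_2-x_3$, $H_2(x)=x_1-x_2+x_3$, $H_3(x)=x_1+x_2-x_3$, $H_4(x)=x_1+x_2+x_3$, and the sets $C_1^0=\{x\in\mathbb{R}^3: H_1(x)>0,\,H_2(x)>0,\,H_3(x)>0,\,H_4(x)>0\}\cup\{0\}$, $C_2^0=\{x\in\mathbb{R}^3: H_1(x)<0,\,H_2(x)<0,\,H_3(x)>0,\,H_4(x)>0\}\cup\{0\}$, $C_3^0=\{x\in\mathbb{R}^3: H_1(x)<0,\,H_2(x)>0,\,H_3(x)<0,\,H_4(x)>0\}\cup\{0\}$. Then the cones $C_1^0,C_2^0,C_3^0$ are cotransverse.
   Context: A subset $X\subseteq\mathbb{R}^3$ is a cone if $x\in X$ and $\lambda\ge 0$ imply $\lambda x\in X$. The convex hull of a set $X$ is $\mathrm{conv}\,X=\{\sum_{i=1}^n\lambda_i x_i: x_i\in X,\ n\in\mathbb{N},\ \lambda_i\ge0,\ \sum_i\lambda_i=1\}$; the convex hull of several cones means the convex hull of their union. Two cones $C,D$ are transverse if $C\cup(-C)$ and $D\cup(-D)$ intersect only in $\{0\}$. Three cones $C_1,C_2,C_3$ are cotransverse if the origin is a vertex of the convex hull of $C_1,C_2,C_3$ and, for every $\{i,j,k\}=\{1,2,3\}$, the cone $C_i$ and the convex hull of the cones $C_j,C_k$ are transverse. *)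

(* points of R^3 are row vectors 'rV[R]_3 over a realType R
   (the real numbers, axiomatized as in MathComp-Analysis). Coordinates
   x_1, x_2, x_3 are x 0 i0, x 0 i1, x 0 i2. *)
From mathcomp Require Import all_boot all_order all_algebra.
From mathcomp Require Import reals.
Set Implicit Arguments. Unset Strict Implicit. Unset Printing Implicit Defensive.
Import Order.TTheory GRing.Theory Num.Theory.
Local Open Scope ring_scope.

Definition i0 : 'I_3 := @Ordinal 3 0 isT.
Definition i1 : 'I_3 := @Ordinal 3 1 isT.
Definition i2 : 'I_3 := @Ordinal 3 2 isT.

Section Defs.
Variable R : realType.
Notation pt := 'rV[R]_3.

Definition is_cone (X : pt -> Prop) : Prop :=
  forall x (l : R), X x -> 0 <= l -> X (l *: x).

Definition conv (X : pt -> Prop) : pt -> Prop := fun v =>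
  exists (n : nat) (lam : 'I_n -> R) (x : 'I_n -> pt),
    (forall i, X (x i)) /\ (forall i, 0 <= lam i) /\
    \sum_(i < n) lam i = 1 /\ v = \sum_(i < n) lam i *: x i.

Definition conv2 (C D : pt -> Prop) : pt -> Prop := conv (fun x => C x \/ D x).
Definition conv3 (C D E : pt -> Prop) : pt -> Prop :=
  conv (fun x => C x \/ D x \/ E x).

Definition is_vertex (K : pt -> Prop) (v : pt) : Prop :=
  K v /\ forall x y (t : R), K x -> K y -> 0 < t < 1 ->
    v = t *: x + (1 - t) *: y -> x = v /\ y = v.

Definition transverse (C D : pt -> Prop) : Prop :=
  forall x, (C x \/ C (- x)) -> (D x \/ D (- x)) -> x = 0.

Definition cotransverse (C1 C2 C3 : pt -> Prop) : Prop :=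
  is_vertex (conv3 C1 C2 C3) 0 /\
  transverse C1 (conv2 C2 C3) /\
  transverse C2 (conv2 C1 C3) /\
  transverse C3 (conv2 C1 C2).

Definition H1 (x : pt) : R := x 0 i0 - x 0 i1 - x 0 i2.
Definition H2 (x : pt) : R := x 0 i0 - x 0 i1 + x 0 i2.
Definition H3 (x : pt) : R := x 0 i0 + x 0 i1 - x 0 i2.
Definition H4 (x : pt) : R := x 0 i0 + x 0 i1 + x 0 i2.

Definition C1_0 : pt -> Prop := fun x =>
  (0 < H1 x /\ 0 < H2 x /\ 0 < H3 x /\ 0 < H4 x) \/ x = 0.
Definition C2_0 : pt -> Prop := fun x =>
  (H1 x < 0 /\ H2 x < 0 /\ 0 < H3 x /\ 0 < H4 x) \/ x = 0.
Definition C3_0 : pt -> Prop := fun x =>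
  (H1 x < 0 /\ 0 < H2 x /\ H3 x < 0 /\ 0 < H4 x) \/ x = 0.
End Defs.

From HB Require Import structures.
From mathcomp Require Import all_boot all_order all_algebra.
From mathcomp Require Import reals.
From mathcomp Require Import ring lra.
Set Implicit Arguments. Unset Strict Implicit. Unset Printing Implicit Defensive.
Import Order.TTheory GRing.Theory Num.Theory.
Local Open Scope ring_scope.

(* All three cones lie, apart from 0, in the open half-space H4 > 0, and a
   linear functional positive on X \ {0} stays positive on conv X \ {0}; hence
   H4 is positive on the hull of the three cones minus 0, and 0 is a vertex.
   For transversality, H1 is positive on C1 \ {0} and negative on the hull of
   C2, C3 minus 0, which rules out C1 meeting that hull, while H4, positive on
   both, rules out -C1 meeting it; H2 and H3 play the role of H1 for C2, C3. *)

Section PositiveFunctionals.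
Variable R : realType.
Notation pt := 'rV[R]_3.

Definition positive_on (f : pt -> R) (X : pt -> Prop) : Prop :=
  forall x, X x -> x != 0 -> 0 < f x.

Lemma positive_onU f (C D : pt -> Prop) :
  positive_on f C -> positive_on f D -> positive_on f (fun x => C x \/ D x).
Proof. by move=> fC fD x [/fC | /fD]. Qed.

Lemma conv_sub (X : pt -> Prop) x : X x -> conv X x.
Proof. by move=> Xx; exists 1%N, (fun=> 1), (fun=> x); rewrite !big_ord1 scale1r. Qed.

Lemma transverse_sym (C D : pt -> Prop) : transverse C D -> transverse D C.
Proof. by move=> CD x Dx Cx; apply: CD. Qed.

Variable f : {scalar pt}.

Lemma positive_on_ge0 X x : positive_on f X -> X x -> 0 <= f x.
Proof.
move=> fX Xx; have [->|x_neq0] := eqVneq x 0; first by rewrite linear0.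
exact/ltW/fX.
Qed.

Lemma positive_on_eq0 X x : positive_on f X -> X x -> f x = 0 -> x = 0.
Proof.
move=> fX Xx fx0; apply/eqP; apply: contraTT isT => x_neq0.
by have := fX x Xx x_neq0; rewrite fx0 ltxx.
Qed.

Lemma positive_on_conv X : positive_on f X -> positive_on f (conv X).
Proof.
move=> fX _ [n [l [x [Xx [l_ge0 [_ ->]]]]]] v_neq0.
have term_ge0 i : 0 <= l i * f (x i) by rewrite mulr_ge0 // (positive_on_ge0 fX).
have -> : f (\sum_(i < n) l i *: x i) = \sum_(i < n) l i * f (x i).
  by rewrite linear_sum; apply: eq_bigr => i _; rewrite linearZ.
rewrite lt_def sumr_ge0 ?andbT //; apply: contra_neq v_neq0 => /eqP.
rewrite psumr_eq0 // => /allP terms0; apply: big1 => i _.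
have := terms0 i (mem_index_enum i); rewrite /= mulf_eq0 => /orP[/eqP-> | /eqP fx0].
  by rewrite scale0r.
by rewrite (positive_on_eq0 fX (Xx i) fx0) scaler0.
Qed.

Lemma positive_on_conv2 C D :
  positive_on f C -> positive_on f D -> positive_on f (conv2 C D).
Proof. by move=> fC fD; apply/positive_on_conv/positive_onU. Qed.

Lemma positive_on_vertex0 K : K 0 -> positive_on f K -> is_vertex K 0.
Proof.
move=> K0 fK; split=> // x y t Kx Ky /andP[t_gt0 t_lt1] comb0.
have := congr1 f comb0; rewrite linear0 linearD !linearZ /= => sum0.
have tfx_ge0 : 0 <= t * f x.
  by apply: mulr_ge0; [lra | exact: positive_on_ge0 fK Kx].
have tfy_ge0 : 0 <= (1 - t) * f y.
  by apply: mulr_ge0; [lra | exact: positive_on_ge0 fK Ky].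
have /eqP : t * f x = 0 by lra.
have /eqP : (1 - t) * f y = 0 by lra.
rewrite !mulf_eq0 subr_eq0 (gt_eqF t_gt0) (gt_eqF t_lt1) /= => /eqP fy0 /eqP fx0.
by rewrite (positive_on_eq0 fK Kx fx0) (positive_on_eq0 fK Ky fy0).
Qed.

Lemma transverse_of_separation (g : {scalar pt}) C K :
  positive_on f C -> positive_on (\- f) K ->
  positive_on g C -> positive_on g K -> transverse C K.
Proof.
move=> fC fK gC gK x Cx Kx; have [//|x_neq0] := eqVneq x 0; exfalso.
have nx_neq0 : - x != 0 by rewrite oppr_eq0.
case: Cx => [Cx | Cnx]; case: Kx => [Kx | Knx].
- by have := fC x Cx x_neq0; have := fK x Kx x_neq0 => /=; lra.
- by have := gC x Cx x_neq0; have := gK _ Knx nx_neq0; rewrite linearN; lra.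
- by have := gC _ Cnx nx_neq0; have := gK x Kx x_neq0; rewrite linearN; lra.
- by have := fC _ Cnx nx_neq0; have := fK _ Knx nx_neq0 => /=; lra.
Qed.

End PositiveFunctionals.

Section SignPatterns.
Variable R : realType.
Notation pt := 'rV[R]_3.

Lemma H1_is_scalar : scalar (@H1 R).
Proof. by move=> a x y; rewrite /H1 !mxE; ring. Qed.
Lemma H2_is_scalar : scalar (@H2 R).
Proof. by move=> a x y; rewrite /H2 !mxE; ring. Qed.
Lemma H3_is_scalar : scalar (@H3 R).
Proof. by move=> a x y; rewrite /H3 !mxE; ring. Qed.
Lemma H4_is_scalar : scalar (@H4 R).
Proof. by move=> a x y; rewrite /H4 !mxE; ring. Qed.

HB.instance Definition _ := GRing.isLinear.Build R pt R *%R (@H1 R) H1_is_scalar.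
HB.instance Definition _ := GRing.isLinear.Build R pt R *%R (@H2 R) H2_is_scalar.
HB.instance Definition _ := GRing.isLinear.Build R pt R *%R (@H3 R) H3_is_scalar.
HB.instance Definition _ := GRing.isLinear.Build R pt R *%R (@H4 R) H4_is_scalar.

Lemma C1_0_signs :
  [/\ positive_on (@H1 R) (@C1_0 R), positive_on (@H2 R) (@C1_0 R),
      positive_on (@H3 R) (@C1_0 R) & positive_on (@H4 R) (@C1_0 R)].
Proof. by split=> x [[? [? [? ?]]] | ->] //; rewrite eqxx. Qed.

Lemma C2_0_signs :
  [/\ positive_on (\- @H1 R) (@C2_0 R), positive_on (\- @H2 R) (@C2_0 R),
      positive_on (@H3 R) (@C2_0 R) & positive_on (@H4 R) (@C2_0 R)].
Proof. by split=> x [[? [? [? ?]]] | ->] //=; rewrite ?eqxx // oppr_gt0. Qed.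

Lemma C3_0_signs :
  [/\ positive_on (\- @H1 R) (@C3_0 R), positive_on (@H2 R) (@C3_0 R),
      positive_on (\- @H3 R) (@C3_0 R) & positive_on (@H4 R) (@C3_0 R)].
Proof. by split=> x [[? [? [? ?]]] | ->] //=; rewrite ?eqxx // oppr_gt0. Qed.

End SignPatterns.

Theorem lemma1 (R : realType) :
  cotransverse (@C1_0 R) (@C2_0 R) (@C3_0 R).
Proof.
have [H1C1 H2C1 H3C1 H4C1] := C1_0_signs R.
have [H1C2 H2C2 H3C2 H4C2] := C2_0_signs R.
have [H1C3 H2C3 H3C3 H4C3] := C3_0_signs R.
split; last split; last split.
- apply: (positive_on_vertex0 (f := @H4 R)); first by apply: conv_sub; left; right.
  by apply: positive_on_conv; apply: positive_onU => //; apply: positive_onU.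
- apply: (transverse_of_separation (f := @H1 R) (g := @H4 R)) => //.
    exact: (positive_on_conv2 (f := \- @H1 R)).
  exact: positive_on_conv2.
- apply: transverse_sym.
  by apply: (transverse_of_separation (f := @H2 R) (g := @H4 R)) => //;
    apply: positive_on_conv2.
- apply: transverse_sym.
  by apply: (transverse_of_separation (f := @H3 R) (g := @H4 R)) => //;
    apply: positive_on_conv2.
Qed.
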